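(* In the setting below, let $D(\alpha)=\mathrm{Var}_{\rho}(E_{loc})-\mathrm{Var}_{\phi_\alpha}(E_{loc}\kappa_\alpha)$. Then: (i) if $0\le\alpha\le 2$, then $D(\alpha)\ge 0$; (ii) if $\alpha<0$ or $\alpha>2$, then $D(\alpha)\le 0$; (iii) $D(0)=0$, $D(2)=0$, and $D(1)=\mathrm{Var}_\rho(|E_{loc}|)\ge 0$.
   Context: Let $\mathbb{V}=\{-1,1\}^n$, let $\rho:\mathbb{V}\to(0,1]$, $v\mapsto\rho^v_v$, be a probability distribution, and let $E_{loc}:\mathbb{V}\to\mathbb{R}$ satisfy $E_{loc}(v)\ne 0$ for all $v$. For $\alpha\in\mathbb{R}$ set $\lambda_\alpha=\big(\sum_v|E_{loc}(v)|^\alpha\rho^v_v\big)^{-1}$, $\kappa_\alpha(v)=1/(\lambda_\alpha|E_{loc}(v)|^\alpha)$, and $\phi_\alpha(v)=\lambda_\alpha|E_{loc}(v)|^\alpha\rho^v_v$ (a probability distribution with $\rho^v_v=\kappa_\alpha(v)\phi_\alpha(v)$). For a probability distribution $q$ on $\mathbb{V}$, $\mathrm{Var}_q(f)=\sum_vq(v)f(v)^2-(\sum_vq(v)f(v))^2$. *)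

From HB Require Import structures.
From mathcomp Require Import all_boot all_order all_algebra.
From mathcomp Require Import reals exp.
Set Implicit Arguments. Unset Strict Implicit. Unset Printing Implicit Defensive.
Import Order.TTheory GRing.Theory Num.Theory.
Local Open Scope ring_scope.

(* The configuration space V = {-1,1}^n; a spin s_i = -1/+1 is encoded by
   the boolean false/true. *)
Definition spinV (n : nat) : finType := {ffun 'I_n -> bool}.

Section Defs.
Variables (R : realType) (n : nat).

Definition Var (q f : spinV n -> R) : R :=
  \sum_v q v * f v ^+ 2 - (\sum_v q v * f v) ^+ 2.

Variables (rho E : spinV n -> R).

Definition lambda_ (alpha : R) : R :=
  (\sum_v powR `|E v| alpha * rho v)^-1.

Definition kappa_ (alpha : R) (v : spinV n) : R :=
  (lambda_ alpha * powR `|E v| alpha)^-1.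

Definition phi_ (alpha : R) (v : spinV n) : R :=
  lambda_ alpha * powR `|E v| alpha * rho v.

Definition Dfun (alpha : R) : R :=
  Var rho E - Var (phi_ alpha) (fun v => E v * kappa_ alpha v).

End Defs.

(* With S = Σ_v ρ(v)|E(v)|^α, the reweighted pair is φ_α = ρ|E|^α / S and
   E κ_α = S E / |E|^α, so φ_α (Eκ_α) = ρ E and φ_α (Eκ_α)^2 = S ρ |E|^(2-α).
   Hence D(α) is the ρ-covariance of |E|^α and |E|^(2-α), which by Chebyshev's
   sum inequality is nonnegative when both exponents are nonnegative (the two
   functions are comonotone) and nonpositive when one exponent is negative. *)
From HB Require Import structures.
From mathcomp Require Import all_boot all_order all_algebra.
From mathcomp Require Import boolp reals exp.
From mathcomp Require Import ring lra.
Set Implicit Arguments. Unset Strict Implicit. Unset Printing Implicit Defensive.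
Import Order.TTheory GRing.Theory Num.Theory.
Local Open Scope ring_scope.

Section Covariance.
Variables (R : numFieldType) (T : finType) (rho : T -> R).

Definition cov (f g : T -> R) : R :=
  \sum_v rho v * (f v * g v) - (\sum_v rho v * f v) * (\sum_v rho v * g v).

Hypothesis rho_sum : \sum_v rho v = 1.

Lemma cov_double_sum (f g : T -> R) :
  cov f g = 2^-1 * \sum_u \sum_v rho u * rho v * ((f u - f v) * (g u - g v)).
Proof.
rewrite /cov; set Sf := \sum_v rho v * f v; set Sg := \sum_v rho v * g v.
set Sfg := \sum_v rho v * (f v * g v).
have inner u : \sum_v rho u * rho v * ((f u - f v) * (g u - g v)) =
    rho u * (f u * g u) - rho u * f u * Sg - rho u * g u * Sf + rho u * Sfg.
  have expand v : rho u * rho v * ((f u - f v) * (g u - g v)) =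
      rho u * (f u * g u) * rho v - rho u * f u * (rho v * g v)
      - rho u * g u * (rho v * f v) + rho u * (rho v * (f v * g v)).
    by ring.
  under eq_bigr do rewrite expand.
  by rewrite big_split /= !sumrB -!mulr_sumr rho_sum mulr1.
under eq_bigr do rewrite inner.
rewrite big_split /= !sumrB -!mulr_suml -/Sf -/Sg -/Sfg rho_sum mul1r.
by field.
Qed.

Lemma cov_cstl (c : R) (g : T -> R) : cov (fun=> c) g = 0.
Proof.
rewrite cov_double_sum big1 ?mulr0 // => u _.
by rewrite big1 // => v _; rewrite subrr mul0r mulr0.
Qed.

Lemma cov_cstr (f : T -> R) (c : R) : cov f (fun=> c) = 0.
Proof.
rewrite cov_double_sum big1 ?mulr0 // => u _.
by rewrite big1 // => v _; rewrite subrr !mulr0.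
Qed.

Hypothesis rho_ge0 : forall v, 0 <= rho v.

Lemma cov_ge0 (f g : T -> R) :
  (forall u v, 0 <= (f u - f v) * (g u - g v)) -> 0 <= cov f g.
Proof.
move=> fg; rewrite cov_double_sum.
apply: mulr_ge0; first by rewrite invr_ge0.
apply: sumr_ge0 => u _; apply: sumr_ge0 => v _.
by apply: mulr_ge0 => //; exact: mulr_ge0.
Qed.

Lemma cov_le0 (f g : T -> R) :
  (forall u v, (f u - f v) * (g u - g v) <= 0) -> cov f g <= 0.
Proof.
move=> fg; rewrite cov_double_sum.
apply: mulr_ge0_le0; first by rewrite invr_ge0.
apply: sumr_le0 => u _; apply: sumr_le0 => v _.
by apply: mulr_ge0_le0 => //; exact: mulr_ge0.
Qed.

End Covariance.

Lemma Var_cov (R : realType) (n : nat) (rho f : spinV n -> R) :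
  Var rho f = cov rho f f.
Proof. by rewrite /Var /cov expr2; under eq_bigr do rewrite expr2. Qed.

Section PowerMonotonicity.
Variables (R : realType) (x y : R).
Hypotheses (x_gt0 : 0 < x) (y_gt0 : 0 < y).

Lemma powR_comonotone (p q : R) : 0 <= p -> 0 <= q ->
  0 <= (powR x p - powR y p) * (powR x q - powR y q).
Proof.
have [x0 y0] : x \is Num.nneg /\ y \is Num.nneg by rewrite !nnegrE !ltW.
move=> p0 q0; have [xy|/ltW yx] := leP x y.
  by apply: mulr_le0; rewrite subr_le0 ge0_ler_powR.
by apply: mulr_ge0; rewrite subr_ge0 ge0_ler_powR.
Qed.

Lemma powR_antimonotone (p q : R) : p < 0 -> 0 <= q ->
  (powR x p - powR y p) * (powR x q - powR y q) <= 0.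
Proof.
rewrite -oppr_gt0 => p0 q0.
have inv z : powR z p = (powR z (- p))^-1 by rewrite -powRN opprK.
have [x0 y0] : 0 < powR x (- p) /\ 0 < powR y (- p) by rewrite !powR_gt0.
have -> : powR x p - powR y p =
    - ((powR x (- p) - powR y (- p)) / (powR x (- p) * powR y (- p))).
  by rewrite !inv; field; rewrite !gt_eqF.
rewrite mulNr mulrAC oppr_le0 divr_ge0 ?(powR_comonotone (ltW p0) q0) //.
by rewrite mulr_ge0 ?ltW.
Qed.

End PowerMonotonicity.

Section Reweighting.
Variables (R : realType) (n : nat) (rho E : spinV n -> R).
Hypotheses (rho_pos : forall v, 0 < rho v) (E_nz : forall v, E v != 0).

Lemma Dfun_cov (alpha : R) :
  Dfun rho E alpha =
  cov rho (fun v => powR `|E v| alpha) (fun v => powR `|E v| (2 - alpha)).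
Proof.
set a := fun v => powR `|E v| alpha; set b := fun v => powR `|E v| (2 - alpha).
have a_neq0 v : a v != 0 by rewrite gt_eqF ?powR_gt0 ?normr_gt0.
have sqrE v : E v ^+ 2 = a v * b v.
  rewrite -powRD ?normr_eq0 ?E_nz ?implybT // addrC subrK.
  by rewrite -real_normK ?num_real // -powR_mulrn.
set S := \sum_v a v * rho v.
have S_neq0 : S != 0.
  rewrite psumr_neq0 => [|v _]; last by rewrite mulr_ge0 ?powR_ge0 ?ltW.
  apply/hasP; exists [ffun=> true]; first exact: mem_index_enum.
  by rewrite mulr_gt0 ?powR_gt0 ?normr_gt0.
have first_moment v :
    S^-1 * a v * rho v * (E v * (S^-1 * a v)^-1) = rho v * E v.
  by field; rewrite S_neq0 a_neq0.
have second_moment v :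
    S^-1 * a v * rho v * (E v * (S^-1 * a v)^-1) ^+ 2 = S * (rho v * b v).
  by rewrite exprMn sqrE; field; rewrite S_neq0 a_neq0.
rewrite /Dfun /Var /phi_ /kappa_ /lambda_ -/a -/S /cov.
rewrite (eq_bigr _ (fun v _ => first_moment v)).
rewrite (eq_bigr _ (fun v _ => second_moment v)) -mulr_sumr.
rewrite (eq_bigr (fun v => rho v * (a v * b v))) => [|v _]; last by rewrite sqrE.
have -> : S = \sum_v rho v * a v by apply: eq_bigr => v _; rewrite mulrC.
ring.
Qed.

End Reweighting.

Theorem lemmaC3 (R : realType) (n : nat) (rho E : spinV n -> R)
  (rho_pos : forall v, 0 < rho v) (rho_le1 : forall v, rho v <= 1)
  (rho_sum : \sum_v rho v = 1)
  (E_nz : forall v, E v != 0) :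
  (forall alpha : R, 0 <= alpha <= 2 -> 0 <= Dfun rho E alpha) /\
  (forall alpha : R, alpha < 0 \/ 2 < alpha -> Dfun rho E alpha <= 0) /\
  (Dfun rho E 0 = 0 /\ Dfun rho E 2 = 0 /\
   Dfun rho E 1 = Var rho (fun v => `|E v|) /\ 0 <= Var rho (fun v => `|E v|)).
Proof.
have E_gt0 v : 0 < `|E v| by rewrite normr_gt0.
have rho_ge0 v : 0 <= rho v by rewrite ltW.
have D_ge0 alpha : 0 <= alpha <= 2 -> 0 <= Dfun rho E alpha.
  move=> /andP[a0 a2]; rewrite Dfun_cov // cov_ge0 // => u v.
  by rewrite powR_comonotone // subr_ge0.
have D1 : Dfun rho E 1 = Var rho (fun v => `|E v|).
  rewrite Dfun_cov // Var_cov (_ : 2 - 1 = 1); last by ring.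
  by congr cov; apply: funext => v; rewrite powRr1 ?ltW.
have D_le0 alpha : alpha < 0 \/ 2 < alpha -> Dfun rho E alpha <= 0.
  rewrite Dfun_cov // => alpha_out; apply: cov_le0 => // u v.
  case: alpha_out => [a0|a2]; first by rewrite powR_antimonotone //; lra.
  by rewrite mulrC powR_antimonotone //; lra.
have D0 : Dfun rho E 0 = 0.
  by rewrite Dfun_cov //; under eq_fun do rewrite powRr0; rewrite cov_cstl.
have D2 : Dfun rho E 2 = 0.
  by rewrite Dfun_cov // subrr; under [X in cov _ _ X]eq_fun do rewrite powRr0;
    rewrite cov_cstr.
have one_in : 0 <= (1 : R) <= 2 by lra.
by do 5!split=> //; rewrite -D1; exact: D_ge0.
Qed.
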